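(* Let $L \geq 1$, $m = L+1$, $\gamma = (L+1)^3$, and for $i \in \{0,\ldots,L\}$ and $k \in [m]$ define $$w_i(k) = \gamma^{2(i+1)k - k^2 + 1} + \sum_{r=0}^L \gamma^{(2r+1)(i+1) - r^2 - r}, \qquad \pi_i(A_k) = \frac{w_i(k)}{\sum_{h=1}^m w_i(h)}.$$ Let $B = \min_{k\in[m]}\prod_{i=1}^L \min\left\{1, \frac{\pi_{i-1}(A_k)}{\pi_i(A_k)}\right\}$. Then $B > \frac{1}{(L+1)^7}$.
   Context: These numbers are the masses of the modes $A_k$ at level $i$ in the paper's construction of a multimodal target (cross terms neglected); $B$ is the bottleneck ratio of the corresponding parallel tempering chain. *)

From mathcomp Require Import all_boot all_order all_algebra.
Set Implicit Arguments. Unset Strict Implicit. Unset Printing Implicit Defensive.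
Import Order.TTheory GRing.Theory Num.Theory.
Local Open Scope ring_scope.

Definition gam (R : realFieldType) (L : nat) : R := ((L.+1) ^ 3)%:R.

(* w_i(k) = gamma^(2(i+1)k - k^2 + 1) + sum_{r=0}^L gamma^((2r+1)(i+1) - r^2 - r),
   integer exponents (they can be negative) *)
Definition wgt (R : realFieldType) (L i k : nat) : R :=
  gam R L ^ ((2 * (i.+1) * k)%:Z - (k ^ 2)%:Z + 1)
  + \sum_(0 <= r < L.+1)
      gam R L ^ (((2 * r).+1 * i.+1)%:Z - (r ^ 2)%:Z - r%:Z).

Definition piA (R : realFieldType) (L i k : nat) : R :=
  wgt R L i k / \sum_(1 <= h < L.+2) wgt R L i h.

Definition prodk (R : realFieldType) (L k : nat) : R :=
  \prod_(1 <= i < L.+1) Num.min 1 (piA R L i.-1 k / piA R L i k).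

Definition Bratio (R : realFieldType) (L : nat) : R :=
  \big[Num.min/1]_(1 <= k < L.+2) prodk R L k.

From mathcomp Require Import all_boot all_order all_algebra.
From mathcomp Require Import zify ring lra.
Import Order.TTheory GRing.Theory Num.Theory.
Set Implicit Arguments. Unset Strict Implicit. Unset Printing Implicit Defensive.
Local Open Scope ring_scope.

(* Dividing w_i(k) by gamma^((i+1)^2+1) and writing q = 1/gamma, j = i+1, the
   weight of mode k at level j becomes q^((j-k)^2) + T_j, where the tail T_j does
   not depend on k and lies between 2q and 2q + (L+1)q^3.  Hence every
   normaliser lies in [1, 1 + c] with c = (L+2)(2q + (L+1)q^3), and the weight
   of mode k one level farther from k is at most 1 + b times the weight at the
   nearer level, b = (L+1)q^2/2.  With e = 1 - (b + c),
   each factor min(1, pi_(i-1)/pi_i) is at least e pi_(i-1)/pi_i before the mode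
   and at least e after it; the ratios before the mode telescope, so
   B >= e^L pi_0(A_k) >= e^L q.  Bernoulli's inequality gives e^L >= 1/8, and
   q/8 = 1/(8(L+1)^3) > 1/(L+1)^7. *)

(* (2r+1)(i+1) - r^2 - r = (i+1)^2 - (i+1-r)(i-r): the r-th tail term of w_i
   has normalised exponent (j-r)(j-r-1) + 1, written without integer subtraction. *)
Definition tail_exp (j r : nat) : nat :=
  if (r < j)%N then ((j - r) * (j - r).-1).+1 else ((r - j) * (r - j).+1).+1.

Definition tail (R : realFieldType) (q : R) (n j : nat) : R :=
  \sum_(0 <= r < n) q ^+ tail_exp j r.

Definition nweight (R : realFieldType) (q : R) (n j k : nat) : R :=
  q ^+ (`|j - k| ^ 2)%N + tail q n j.

Definition nmass (R : realFieldType) (q : R) (n j : nat) : R :=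
  \sum_(1 <= h < n.+1) nweight q n j h.

Definition tail_bound (R : realFieldType) (q : R) (n : nat) : R :=
  2 * q + n%:R * q ^+ 3.

Lemma exprz_subn (R : realFieldType) (g : R) (N : int) (e : nat) :
  g != 0 -> g ^ (N - e%:Z) = g ^ N * g^-1 ^+ e.
Proof. by move=> g0; rewrite exprzDr ?unitfE // exprVn exprnN. Qed.

Lemma wgt_normalize (R : realFieldType) (L i k : nat) :
  wgt R L i k = gam R L ^ (i.+1 ^ 2 + 1)%N * nweight (gam R L)^-1 L.+1 i.+1 k.
Proof.
have g0 : gam R L != 0 by rewrite pnatr_eq0 expn_eq0.
rewrite /wgt /nweight /tail mulrDr mulr_sumr; congr (_ + _).
  rewrite -exprz_subn //; congr (_ ^ _); nia.
apply: eq_bigr => r _; rewrite -exprz_subn //; congr (_ ^ _).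
by rewrite /tail_exp; case: ltnP => hr; nia.
Qed.

Lemma piA_normalize (R : realFieldType) (L i k : nat) :
  piA R L i k = nweight (gam R L)^-1 L.+1 i.+1 k / nmass (gam R L)^-1 L.+1 i.+1.
Proof.
have g0 : gam R L != 0 by rewrite pnatr_eq0 expn_eq0.
rewrite /piA /nmass wgt_normalize (eq_bigr _ (fun h _ => wgt_normalize R L i h)).
by rewrite -mulr_sumr invfM mulrACA mulfV ?mul1r // expfz_eq0 negb_and g0 orbT.
Qed.

Section ExprSums.
Variables (R : realFieldType) (q : R).
Hypotheses (q_ge0 : 0 <= q) (q_le1 : q <= 1).

Lemma sum_expr_ge_head (g : nat -> nat) (m : nat) : (0 < m)%N ->
  q ^+ g 0%N <= \sum_(0 <= s < m) q ^+ g s.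
Proof.
by move=> m_gt0; rewrite big_ltn // lerDl sumr_ge0 // => s _; rewrite exprn_ge0.
Qed.

Lemma sum_expr_le_head_cubes (g : nat -> nat) (m : nat) :
  g 0%N = 1%N -> (forall s, (0 < s)%N -> (3 <= g s)%N) ->
  \sum_(0 <= s < m) q ^+ g s <= q + m%:R * q ^+ 3.
Proof.
move=> g0 g_ge3; case: m => [|m].
  by rewrite big_geq // mul0r addr0.
rewrite big_ltn // g0 expr1 lerD2l.
apply: le_trans (_ : \sum_(1 <= s < m.+1) q ^+ 3 <= _).
  by apply: ler_sum_nat => s /andP[s_gt0 _]; apply: ler_wiXn2l => //; apply: g_ge3.
rewrite sumr_const_nat subn1 mulr_natl.
exact: ler_wpMn2l (exprn_ge0 3 q_ge0) _ _ (leqnSn m).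
Qed.

End ExprSums.

Lemma tail_split (R : realFieldType) (q : R) (n j : nat) : (j <= n)%N ->
  tail q n j = \sum_(0 <= s < j) q ^+ (s * s.+1).+1
             + \sum_(0 <= s < n - j) q ^+ (s * s.+1).+1.
Proof.
move=> jn; rewrite /tail (big_cat_nat (leq0n j) jn); congr (_ + _).
  rewrite big_nat_rev; apply: eq_big_nat => s /andP[_ sj].
  rewrite add0n /tail_exp ifT; last by lia.
  have -> : (j - (j - s.+1) = s.+1)%N by lia.
  by rewrite mulnC.
rewrite -[X in \big[_/_]_(X <= _ < _) _](add0n j) big_addn; apply: eq_big_nat => s _.
by rewrite /tail_exp ifF; [congr (_ ^+ _); nia | lia].
Qed.

Lemma peak_split (R : realFieldType) (q : R) (n j : nat) : (0 < j <= n)%N ->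
  \sum_(1 <= h < n.+1) q ^+ (`|j - h| ^ 2)%N
    = 1 + \sum_(0 <= s < j.-1) q ^+ (s.+1 ^ 2) + \sum_(0 <= s < n - j) q ^+ (s.+1 ^ 2).
Proof.
move=> /andP[j_gt0 jn]; rewrite (big_cat_nat j_gt0) /=; last by lia.
rewrite [\sum_(j <= i < n.+1) _]big_ltn; last by lia.
rewrite distnn expr0 addrCA addrA; congr (1 + _ + _).
  rewrite big_nat_rev /= big_add1 /=; apply: eq_big_nat => s /andP[_ sj].
  congr (_ ^+ _); nia.
rewrite -[X in \big[_/_]_(X <= _ < _) _](add0n j.+1) big_addn subSS.
by apply: eq_big_nat => s _; congr (_ ^+ _); nia.
Qed.

Section NormalizedWeights.
Variables (R : realFieldType) (q : R) (n : nat).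
Hypotheses (q_ge0 : 0 <= q) (q_le1 : q <= 1).

Lemma tail_ge0 (j : nat) : 0 <= tail q n j.
Proof. by apply: sumr_ge0 => r _; rewrite exprn_ge0. Qed.

Lemma tail_ge (j : nat) : (0 < j < n)%N -> 2 * q <= tail q n j.
Proof.
move=> /andP[j_gt0 jn]; rewrite tail_split ?(ltnW jn) // mulr2n mulrDl mul1r.
have half_ge m : (0 < m)%N -> q <= \sum_(0 <= s < m) q ^+ (s * s.+1).+1.
  move=> m_gt0; rewrite -[q in q <= _]expr1.
  exact: (sum_expr_ge_head q_ge0 (fun s => (s * s.+1).+1)).
by apply: lerD; apply: half_ge; rewrite ?subn_gt0.
Qed.

Lemma tail_le (j : nat) : (j <= n)%N -> tail q n j <= tail_bound q n.
Proof.
move=> jn; rewrite tail_split // /tail_bound.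
have half_le m : \sum_(0 <= s < m) q ^+ (s * s.+1).+1 <= q + m%:R * q ^+ 3.
  by apply: sum_expr_le_head_cubes => // s s_gt0; nia.
have -> : n%:R = j%:R + (n - j)%:R :> R by rewrite -natrD subnKC.
have := half_le j; have := half_le (n - j)%N; lra.
Qed.

Lemma tail_le_scaled (j j' : nat) : (j <= n)%N -> (0 < j' < n)%N ->
  tail q n j <= (1 + n%:R * q ^+ 2 / 2) * tail q n j'.
Proof.
move=> jn j'n; apply: le_trans (tail_le jn) _.
have -> : tail_bound q n = (1 + n%:R * q ^+ 2 / 2) * (2 * q).
  by rewrite /tail_bound; field.
by rewrite ler_wpM2l ?tail_ge // addr_ge0 // divr_ge0 // mulr_ge0 // exprn_ge0.
Qed.

Lemma nweight_le_scaled (j j' k : nat) :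
  (`|j' - k| <= `|j - k|)%N -> (j <= n)%N -> (0 < j' < n)%N ->
  nweight q n j k <= (1 + n%:R * q ^+ 2 / 2) * nweight q n j' k.
Proof.
move=> dist_le jn j'n; rewrite /nweight mulrDr.
apply: lerD; last exact: tail_le_scaled.
apply: le_trans (_ : q ^+ (`|j' - k| ^ 2)%N <= _).
  by apply: ler_wiXn2l => //; rewrite leq_exp2r.
by rewrite ler_peMl ?exprn_ge0 // lerDl divr_ge0 // mulr_ge0 // exprn_ge0.
Qed.

Lemma nweight_le_peak (j k : nat) : nweight q n j k <= nweight q n j j.
Proof. by rewrite lerD2r distnn expr0 exprn_ile1. Qed.

Lemma nweight_le_nmass (j k : nat) : (0 < j <= n)%N ->
  nweight q n j k <= nmass q n j.
Proof.
move=> jn; apply: le_trans (nweight_le_peak j k) _.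
rewrite /nmass (bigD1_seq j) ?mem_index_iota ?iota_uniq //=.
rewrite lerDl sumr_ge0 // => h _.
by rewrite addr_ge0 ?tail_ge0 ?exprn_ge0.
Qed.

Lemma nmass_ge1 (j : nat) : (0 < j <= n)%N -> 1 <= nmass q n j.
Proof.
move=> jn; apply: le_trans (nweight_le_nmass j jn).
by rewrite /nweight distnn expr0 lerDl tail_ge0.
Qed.

Lemma nmass_le (j : nat) : (0 < j <= n)%N ->
  nmass q n j <= 1 + n.+1%:R * tail_bound q n.
Proof.
move=> jn; rewrite /nmass big_split /= sumr_const_nat subSS subn0 peak_split //.
have peak_le m : \sum_(0 <= s < m) q ^+ (s.+1 ^ 2) <= q + m%:R * q ^+ 3.
  by apply: sum_expr_le_head_cubes => // s s_gt0; nia.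
have tail_n : n%:R * tail q n j <= n%:R * tail_bound q n.
  by rewrite ler_wpM2l ?tail_le //; case/andP: jn.
have count : j.-1%:R * q ^+ 3 + (n - j)%:R * q ^+ 3 <= n%:R * q ^+ 3.
  by rewrite -mulrDl -natrD ler_wpM2r ?exprn_ge0 // ler_nat; lia.
have := peak_le j.-1; have := peak_le (n - j)%N.
rewrite /tail_bound mulrSr in tail_n *; lra.
Qed.

End NormalizedWeights.

Lemma ratio_le_mul (R : realFieldType) (a b za zb s t : R) :
  0 <= a -> 0 < b -> 1 <= za -> 0 < zb -> a <= s * b -> zb <= t ->
  a / za / (b / zb) <= s * t.
Proof.
move=> a_ge0 b_gt0 za_ge1 zb_gt0 ab zbt.
have za_gt0 : 0 < za := lt_le_trans ltr01 za_ge1.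
have -> : a / za / (b / zb) = (a / b) * (zb / za).
  by field; rewrite !gt_eqF.
apply: ler_pM; rewrite ?divr_ge0 ?(ltW b_gt0) ?(ltW za_gt0) ?(ltW zb_gt0) //.
  by rewrite ler_pdivrMr.
have t_ge0 : 0 <= t := le_trans (ltW zb_gt0) zbt.
by rewrite ler_pdivrMr // (le_trans zbt) // ler_peMr.
Qed.

Lemma bernoulli_ineq (R : realFieldType) (d : R) (m : nat) : 0 <= d <= 1 ->
  1 - m%:R * d <= (1 - d) ^+ m.
Proof.
move=> /andP[d_ge0 d_le1]; elim: m => [|m IH]; first by rewrite expr0 mul0r subr0.
have := ler_wpM2l (_ : 0 <= 1 - d) IH; rewrite subr_ge0 => /(_ d_le1).
rewrite exprS -natr1; have := mulr_ge0 (ler0n R m) (mulr_ge0 d_ge0 d_ge0); nra.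
Qed.

Section MinRatioProduct.
Variables (R : realFieldType) (P : nat -> R) (e : R).
Hypotheses (e_ge0 : 0 <= e) (e_le1 : e <= 1) (P_gt0 : forall i, 0 < P i).

Lemma min1_ratio_ge0 (i : nat) : 0 <= Num.min 1 (P i.-1 / P i).
Proof. by rewrite le_min ler01 divr_ge0 // ltW. Qed.

Lemma prod_min1_ratio_rising (m : nat) :
  (forall i, (0 < i <= m)%N -> e * (P i.-1 / P i) <= 1) ->
  e ^+ m * P 0%N <= (\prod_(1 <= i < m.+1) Num.min 1 (P i.-1 / P i)) * P m.
Proof.
elim: m => [|m IH] rise; first by rewrite big_geq // expr0 !mul1r.
have /IH IHm : forall i, (0 < i <= m)%N -> e * (P i.-1 / P i) <= 1.
  by move=> i /andP[i_gt0 i_le]; apply: rise; rewrite i_gt0 leqW.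
have step : e * P m <= Num.min 1 (P m / P m.+1) * P m.+1.
  rewrite -{1}(divfK (lt0r_neq0 (P_gt0 m.+1)) (P m)) mulrA.
  apply: ler_wpM2r; first exact: ltW.
  have rise_m : e * (P m / P m.+1) <= 1 by apply: (rise m.+1); rewrite /= leqnn.
  by rewrite le_min rise_m ler_piMl // divr_ge0 // ltW.
rewrite big_nat_recr //= -mulrA.
have -> : e ^+ m.+1 * P 0%N = e * (e ^+ m * P 0%N) by rewrite exprS mulrA.
apply: le_trans (_ : e * ((\prod_(1 <= i < m.+1) Num.min 1 (P i.-1 / P i)) * P m) <= _).
  by rewrite ler_wpM2l.
by rewrite mulrCA ler_wpM2l // prodr_ge0 // => i _; apply: min1_ratio_ge0.
Qed.

Lemma prod_min1_ratio_ge (K L : nat) : (K <= L)%N ->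
  (forall i, (i <= L)%N -> P i <= 1) ->
  (forall i, (0 < i < K)%N -> e * (P i.-1 / P i) <= 1) ->
  (forall i, (K < i <= L)%N -> e <= P i.-1 / P i) ->
  e ^+ L * P 0%N <= \prod_(1 <= i < L.+1) Num.min 1 (P i.-1 / P i).
Proof.
move=> KL P_le1 rise fall.
have before : e ^+ K * P 0%N <= \prod_(1 <= i < K.+1) Num.min 1 (P i.-1 / P i).
  case: K KL rise {fall} => [|K] KL rise.
    by rewrite big_geq // expr0 mul1r P_le1.
  (* The factor at i = K.+1 needs no ratio bound: as P K.+1 <= 1 it is at
     least P K, which closes the telescope. *)
  have mid : P K <= Num.min 1 (P K / P K.+1).
    rewrite le_min P_le1 ?ler_pdivlMr //=; last exact: ltnW.
    by rewrite ler_piMr ?P_le1 // ltW.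
  have /prod_min1_ratio_rising rising :
      forall i, (0 < i <= K)%N -> e * (P i.-1 / P i) <= 1.
    by move=> i /andP[i_gt0 i_le]; apply: rise; rewrite i_gt0 ltnS.
  rewrite big_nat_recr //=; apply: le_trans (le_trans _ rising) _.
    by rewrite exprSr mulrAC ler_piMr // mulr_ge0 ?exprn_ge0 // ltW.
  by rewrite ler_wpM2l // prodr_ge0 // => i _; apply: min1_ratio_ge0.
have after : e ^+ (L - K) <= \prod_(K.+1 <= i < L.+1) Num.min 1 (P i.-1 / P i).
  rewrite -subSS -prodr_const_nat big_nat_cond [X in _ <= X]big_nat_cond.
  apply: ler_prod => i /andP[/andP[Ki iL] _].
  by rewrite e_ge0 le_min e_le1 fall // Ki.
rewrite (big_cat_nat (n := K.+1)) //=.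
have -> : e ^+ L = e ^+ K * e ^+ (L - K) by rewrite -exprD subnKC.
rewrite mulrAC; apply: ler_pM => //.
  by rewrite mulr_ge0 ?exprn_ge0 // ltW.
exact: exprn_ge0.
Qed.

End MinRatioProduct.

Definition step_growth (R : realFieldType) (q : R) (n : nat) : R :=
  (1 + n%:R * q ^+ 2 / 2) * (1 + n.+1%:R * tail_bound q n).

Definition step_loss (R : realFieldType) (q : R) (n : nat) : R :=
  n%:R * q ^+ 2 / 2 + n.+1%:R * tail_bound q n.

Section ModeRatios.
Variables (R : realFieldType) (q : R) (n : nat).
Hypotheses (q_gt0 : 0 < q) (q_le1 : q <= 1) (n_gt0 : (0 < n)%N).

Let q_ge0 : 0 <= q := ltW q_gt0.

Lemma tail_bound_ge0 : 0 <= tail_bound q n.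
Proof. by rewrite addr_ge0 ?mulr_ge0 ?exprn_ge0. Qed.

Lemma step_loss_ge0 : 0 <= step_loss q n.
Proof.
by rewrite addr_ge0 ?divr_ge0 ?mulr_ge0 ?exprn_ge0 ?tail_bound_ge0.
Qed.

Lemma step_growth_gt0 : 0 < step_growth q n.
Proof.
by rewrite mulr_gt0 ?ltr_wpDr ?divr_ge0 ?mulr_ge0 ?exprn_ge0 ?tail_bound_ge0.
Qed.

Lemma step_loss_growth_le1 : (1 - step_loss q n) * step_growth q n <= 1.
Proof.
rewrite /step_loss /step_growth.
set b := _ / 2; set c := _ * tail_bound q n.
have b_ge0 : 0 <= b by rewrite divr_ge0 ?mulr_ge0 ?exprn_ge0.
have c_ge0 : 0 <= c by rewrite mulr_ge0 ?tail_bound_ge0.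
have := mulr_ge0 (addr_ge0 b_ge0 c_ge0) (mulr_ge0 b_ge0 c_ge0); nra.
Qed.

Lemma nweight_gt0 (j k : nat) : 0 < nweight q n j k.
Proof. by rewrite ltr_wpDr ?tail_ge0 ?exprn_gt0. Qed.

Lemma nmass_gt0 (j : nat) : 0 < nmass q n j.
Proof.
rewrite /nmass big_ltn // ltr_wpDr ?nweight_gt0 // sumr_ge0 // => h _.
exact: ltW (nweight_gt0 _ _).
Qed.

Lemma nratio_rising (i k : nat) : (0 < i)%N -> (i.+1 < k <= n)%N ->
  nweight q n i k / nmass q n i / (nweight q n i.+1 k / nmass q n i.+1)
    <= step_growth q n.
Proof.
move=> i_gt0 /andP[ik kn]; apply: ratio_le_mul.
- exact: ltW (nweight_gt0 _ _).
- exact: nweight_gt0.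
- by apply: nmass_ge1 => //; lia.
- exact: nmass_gt0.
- by apply: nweight_le_scaled => //; lia.
- by apply: nmass_le => //; lia.
Qed.

Lemma nratio_falling (i k : nat) : (0 < i < n)%N -> (k <= i)%N ->
  (step_growth q n)^-1
    <= nweight q n i k / nmass q n i / (nweight q n i.+1 k / nmass q n i.+1).
Proof.
move=> /andP[i_gt0 i_lt] ki.
rewrite -[X in _ <= X]invrK invf_div.
rewrite lef_pV2 ?posrE ?step_growth_gt0 ?divr_gt0 ?nweight_gt0 ?nmass_gt0 //.
apply: ratio_le_mul.
- exact: ltW (nweight_gt0 _ _).
- exact: nweight_gt0.
- by apply: nmass_ge1 => //; lia.
- exact: nmass_gt0.
- by apply: nweight_le_scaled => //; lia.
- by apply: nmass_le => //; lia.
Qed.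

Lemma nratio_head_ge (k : nat) : (1 < n)%N -> n.+1%:R * tail_bound q n <= 1 ->
  q <= nweight q n 1 k / nmass q n 1.
Proof.
move=> n_gt1 c_le1; rewrite ler_pdivlMr ?nmass_gt0 //.
have mass_le2 : nmass q n 1 <= 2.
  by apply: le_trans (nmass_le q_ge0 q_le1 _) _; [rewrite n_gt0 | lra].
have := tail_ge q_ge0 (j := 1) n_gt1.
have := ler_wpM2l q_ge0 mass_le2.
rewrite /nweight; have := exprn_ge0 (`|1 - k| ^ 2)%N q_ge0; lra.
Qed.

End ModeRatios.

Lemma gam_inv (R : realFieldType) (L : nat) :
  (gam R L)^-1 = (L.+1%:R)^-1 ^+ 3.
Proof. by rewrite /gam natrX exprVn. Qed.

Lemma gam_inv_gt0 (R : realFieldType) (L : nat) : 0 < (gam R L)^-1.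
Proof. by rewrite invr_gt0 ltr0n expn_gt0. Qed.

Lemma gam_inv_le1 (R : realFieldType) (L : nat) : (gam R L)^-1 <= 1.
Proof. by rewrite invf_le1 ?ler1n ?ltr0n expn_gt0. Qed.

Lemma prodk_ge (R : realFieldType) (L k : nat) : (0 < k <= L.+1)%N ->
  step_loss (gam R L)^-1 L.+1 <= 1 ->
  (1 - step_loss (gam R L)^-1 L.+1) ^+ L * piA R L 0 k <= prodk R L k.
Proof.
move=> /andP[k_gt0 kn] loss_le1.
have q_gt0 := gam_inv_gt0 R L; have q_le1 := gam_inv_le1 R L.
set q := (gam R L)^-1 in q_gt0 q_le1 loss_le1 *.
have e_ge0 : 0 <= 1 - step_loss q L.+1 by rewrite subr_ge0.
have loss_growth := step_loss_growth_le1 L.+1 q_gt0.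
have KL : (k.-1 <= L)%N by rewrite -ltnS prednK.
apply: (prod_min1_ratio_ge e_ge0 _ _ KL).
- by rewrite lerBlDr lerDl step_loss_ge0.
- by move=> i; rewrite piA_normalize divr_gt0 ?nweight_gt0 ?nmass_gt0.
- move=> i iL; rewrite piA_normalize ler_pdivrMr ?nmass_gt0 // mul1r.
  exact: nweight_le_nmass (ltW q_gt0) q_le1 _ _ _.
- move=> i /andP[i_gt0 iK]; rewrite !piA_normalize -/q prednK //.
  have rising : (i.+1 < k <= L.+1)%N by rewrite kn andbT -ltn_predRL.
  have ratio_le := nratio_rising q_gt0 q_le1 (ltn0Sn L) i_gt0 rising.
  exact: le_trans (ler_wpM2l e_ge0 ratio_le) loss_growth.
- move=> i /andP[Ki iL]; rewrite !piA_normalize -/q prednK; last by lia.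
  have falling : (0 < i < L.+1)%N by lia.
  have ki : (k <= i)%N by lia.
  apply: le_trans (nratio_falling q_gt0 q_le1 (ltn0Sn L) falling ki).
  by rewrite -[X in _ <= X]div1r ler_pdivlMr ?step_growth_gt0.
Qed.

Lemma exprS_le_half (R : realFieldType) (r : R) (k : nat) : 0 <= r -> r <= 1 / 2 ->
  r ^+ k.+1 <= r ^+ k / 2.
Proof.
move=> r_ge0 r_le_half; rewrite exprSr; apply: ler_wpM2l; first exact: exprn_ge0.
by rewrite -div1r.
Qed.

Lemma invr_natS_le_half (R : realFieldType) (L : nat) : (0 < L)%N ->
  (L.+1%:R : R)^-1 <= 1 / 2.
Proof. by move=> L_gt0; rewrite div1r lef_pV2 ?posrE ?ltr0n // ler_nat ltnS. Qed.

Lemma step_loss_gam_le (R : realFieldType) (L : nat) : (0 < L)%N ->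
  L%:R * step_loss (gam R L)^-1 L.+1 <= 7 / 8.
Proof.
move=> L_gt0; set r : R := (L.+1%:R)^-1.
have r_gt0 : 0 < r by rewrite invr_gt0 ltr0n.
have r_le_half : r <= 1 / 2 by apply: invr_natS_le_half.
have N_r : L.+1%:R = r^-1 by rewrite invrK.
have loss_r : step_loss (gam R L)^-1 L.+1
    = r ^+ 5 / 2 + 2 * r ^+ 2 + 2 * r ^+ 3 + r ^+ 7 + r ^+ 8.
  rewrite /step_loss /tail_bound gam_inv -/r -[L.+2%:R]natr1 N_r.
  by field; exact: lt0r_neq0 r_gt0.
have loss_le : step_loss (gam R L)^-1 L.+1 <= 7 / 2 * r ^+ 2.
  have halve k := exprS_le_half k (ltW r_gt0) r_le_half.
  move: (halve 2%N) (halve 3%N) (halve 4%N) (halve 5%N) (halve 6%N) (halve 7%N).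
  by rewrite loss_r; have := exprn_ge0 2 (ltW r_gt0); lra.
have L_r : L%:R = r^-1 - 1 by rewrite -N_r -natr1 addrK.
rewrite L_r; apply: le_trans (ler_wpM2l _ loss_le) _.
  by rewrite subr_ge0 invf_ge1 //; lra.
have -> : (r^-1 - 1) * (7 / 2 * r ^+ 2) = 7 / 2 * (r - r ^+ 2).
  by field; exact: lt0r_neq0 r_gt0.
rewrite expr2; nra.
Qed.

Lemma prodk_gt (R : realFieldType) (L k : nat) : (0 < L)%N -> (0 < k <= L.+1)%N ->
  1 / ((L.+1) ^ 7)%:R < prodk R L k.
Proof.
move=> L_gt0 kn.
have q_gt0 := gam_inv_gt0 R L; have q_le1 := gam_inv_le1 R L.
have loss_ge0 := step_loss_ge0 L.+1 q_gt0.
have Lloss := step_loss_gam_le R L_gt0.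
set q := (gam R L)^-1 in q_gt0 q_le1 loss_ge0 Lloss *.
have L_ge1 : 1 <= L%:R :> R by rewrite ler1n.
have loss_le1 : step_loss q L.+1 <= 1.
  by have := ler_wpM2r loss_ge0 L_ge1; lra.
have power : 1 / 8 <= (1 - step_loss q L.+1) ^+ L.
  by apply: le_trans (bernoulli_ineq L _); [lra | rewrite loss_ge0].
have head : q <= piA R L 0 k.
  rewrite piA_normalize -/q; apply: nratio_head_ge => //.
  by apply: le_trans loss_le1; rewrite lerDr divr_ge0 ?mulr_ge0 ?exprn_ge0 ?ltW.
apply: lt_le_trans (prodk_ge kn loss_le1).
apply: lt_le_trans (_ : 1 / 8 * q <= _); last first.
  by apply: ler_pM => //; [lra | exact: ltW].
set r : R := (L.+1%:R)^-1.
have r_gt0 : 0 < r by rewrite invr_gt0 ltr0n.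
have halve k := exprS_le_half k (ltW r_gt0) (invr_natS_le_half R L_gt0).
have -> : 1 / ((L.+1) ^ 7)%:R = r ^+ 7 :> R by rewrite natrX exprVn div1r.
rewrite /q gam_inv -/r.
move: (halve 3%N) (halve 4%N) (halve 5%N) (halve 6%N).
by have := exprn_gt0 3 r_gt0; lra.
Qed.

Theorem lemma12 (R : realFieldType) (L : nat) (hL : (1 <= L)%N) :
  1 / ((L.+1) ^ 7)%:R < Bratio R L.
Proof.
rewrite /Bratio big_nat_cond; apply: (big_ind (fun x => 1 / ((L.+1) ^ 7)%:R < x)).
- by rewrite ltr_pdivrMr ?mul1r ?ltr1n ?ltr0n ?expn_gt0 // -[1%N](exp1n 7) ltn_exp2r.
- by move=> x y x_gt y_gt; rewrite lt_min x_gt y_gt.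
- by move=> k /andP[kn _]; apply: prodk_gt.
Qed.
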